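(* Let $D$ be a weakly connected digraph with $n>2$ nodes. Then the burning number of $D$ is at most $n-1$, and this bound is sharp: for every $n>2$ there is a weakly connected digraph with $n$ nodes whose burning number is $n-1$.
   Context: Burning process on a digraph $D$: a sequence $(x_1,\ldots,x_b)$ of nodes is a burning sequence for $D$ if after $b$ steps of the following process every node of $D$ is burned; the $i$-th step consists of first burning all out-neighbours of all currently burned nodes, and then burning the node $x_i$. The burning number of $D$ is the length of a shortest burning sequence. Equivalently, with $N^+_k(v)$ the set of nodes reachable from $v$ by a directed path with at most $k$ arcs, the burning number is the least $b$ such that there are nodes $v_1,\ldots,v_b$ with $V(D)=\bigcup_{i=1}^b N^+_{i-1}(v_i)$. *)

From mathcomp Require Import all_boot.
Set Implicit Arguments. Unset Strict Implicit. Unset Printing Implicit Defensive.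

(* A digraph on the finite node type T is given by its arc relation e
   (arc x -> y iff e x y); digraphs have no loops: e is irreflexive. *)
Definition digraph (T : finType) (e : rel T) : Prop := irreflexive e.

Definition weakly_connected (T : finType) (e : rel T) : Prop :=
  forall x y : T, connect (fun a b => e a b || e b a) x y.

(* u is in N^+_k(v): there is a directed path v = p_0 -> p_1 -> ... -> u
   with at most k arcs (path p of length size p). *)
Definition in_out_ball (T : finType) (e : rel T) (k : nat) (v u : T) : Prop :=
  exists p : seq T, [/\ path e v p, last v p = u & size p <= k].

(* s = (x_1, ..., x_b) is a burning sequence: V(D) = \bigcup_i N^+_{i-1}(x_i).
   With 0-based index i, the node nth x0 s i is x_{i+1} and its ball radius is i. *)
Definition burning_seq (T : finType) (e : rel T) (s : seq T) : Prop :=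
  forall u : T, exists2 i, i < size s &
    exists x0 : T, in_out_ball e i (nth x0 s i) u.

Definition burning_number (T : finType) (e : rel T) (b : nat) : Prop :=
  (exists s : seq T, burning_seq e s /\ size s = b) /\
  (forall s : seq T, burning_seq e s -> b <= size s).

From mathcomp Require Import all_boot.
From mathcomp Require Import zify.
Set Implicit Arguments. Unset Strict Implicit. Unset Printing Implicit Defensive.

(* Upper bound: a weakly connected digraph with at least two nodes has an arc
   a -> b.  Burn every node other than a and b one per step, then burn a last:
   b is an out-neighbour of a, and the last radius is at least 1 as soon as
   there is a third node.  Sharpness: in the in-star, where every other node
   has a single arc into a centre c, no node except c has an in-neighbour, so
   each of these n - 1 sources must itself occur in any burning sequence. *)

Section Balls.

Variables (T : finType) (e : rel T).

Lemma in_out_ball_refl k v : in_out_ball e k v v.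
Proof. by exists [::]. Qed.

Lemma in_out_ball_arc k v u : 0 < k -> e v u -> in_out_ball e k v u.
Proof. by move=> k_gt0 evu; exists [:: u]; rewrite /= evu. Qed.

Lemma in_out_ball_source k v u :
  (forall w, ~~ e w u) -> in_out_ball e k v u -> v = u.
Proof.
move=> no_in [p [+ last_u _]]; case/lastP: p last_u => [|p w] //=.
rewrite rcons_path last_rcons => -> /andP[_ ewu].
by have := no_in (last v p); rewrite ewu.
Qed.

End Balls.

Section BurningSequences.

Variables (T : finType) (e : rel T).

Lemma burning_seq_rcons_arc (s : seq T) a b :
  e a b -> 0 < size s -> {subset predC1 b <= rcons s a} ->
  burning_seq e (rcons s a).
Proof.
move=> eab s_gt0 sub u; case: (eqVneq u b) => [->|ub].
  exists (size s); first by rewrite size_rcons.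
  by exists a; rewrite nth_rcons ltnn eqxx; apply: in_out_ball_arc.
have us : u \in rcons s a by apply: sub; rewrite inE ub.
exists (index u (rcons s a)); first by rewrite index_mem.
by exists u; rewrite nth_index //; apply: in_out_ball_refl.
Qed.

Definition sources : {pred T} := [pred u | [forall w, ~~ e w u]].

Lemma sources_subset_burning_seq s : burning_seq e s -> {subset sources <= s}.
Proof.
move=> burn u /forallP no_in; have [i lt_i_s [x0 ball]] := burn u.
by rewrite -(in_out_ball_source no_in ball) mem_nth.
Qed.

Lemma card_sources_le_burning_seq s : burning_seq e s -> #|sources| <= size s.
Proof.
move=> burn; apply: leq_trans (card_size s).
by apply/subset_leq_card/subsetP/sources_subset_burning_seq.
Qed.

End BurningSequences.

Lemma weakly_connected_arc (T : finType) (e : rel T) :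
  weakly_connected e -> 1 < #|T| -> exists a b, e a b.
Proof.
move=> wc /card_gt1P[x [y [_ _ xy]]].
have /connectP[[|z p] /= xzp y_last] := wc x y; first by rewrite y_last eqxx in xy.
by case/andP: xzp => /orP[exz | ezx] _; [exists x, z | exists z, x].
Qed.

Lemma burning_seq_card_sub1 (T : finType) (e : rel T) :
  digraph e -> weakly_connected e -> 2 < #|T| ->
  exists2 s, burning_seq e s & size s = #|T| - 1.
Proof.
move=> irr wc T_gt2; have [a [b eab]] := weakly_connected_arc wc (ltnW T_gt2).
have ab : a != b by apply: contraTneq eab => ->; rewrite irr.
have size_rest : size (enum (predC (pred2 a b))) = #|T| - 2.
  by rewrite -cardE -(cardC (pred2 a b)) card2 ab addKn.
exists (rcons (enum (predC (pred2 a b))) a); last by rewrite size_rcons size_rest; lia.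
apply: burning_seq_rcons_arc eab _ _; first by rewrite size_rest; lia.
move=> u; rewrite !inE mem_rcons inE mem_enum !inE negb_or => ub.
by case: eqP.
Qed.

Lemma burning_number_le_card_sub1 (T : finType) (e : rel T) b :
  digraph e -> weakly_connected e -> 2 < #|T| ->
  burning_number e b -> b <= #|T| - 1.
Proof.
move=> irr wc T_gt2 [_ b_min].
by have [s burn <-] := burning_seq_card_sub1 irr wc T_gt2; apply: b_min.
Qed.

Section InStar.

Variables (T : finType) (c : T).

Definition in_star : rel T := fun x y => (y == c) && (x != c).

Lemma in_star_digraph : digraph in_star.
Proof. by move=> x; rewrite /in_star; case: eqP. Qed.

Lemma in_star_weakly_connected : weakly_connected in_star.
Proof.
have to_c z : connect (fun a b => in_star a b || in_star b a) z c.
  case: (eqVneq z c) => [->|zc]; first exact: connect0.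
  by apply: connect1; rewrite /in_star eqxx zc.
move=> x y; apply: connect_trans (to_c x) _.
by rewrite sym_connect_sym; [apply: to_c | move=> a b; rewrite orbC].
Qed.

Lemma in_star_sources : {subset predC1 c <= sources in_star}.
Proof. by move=> u uc; apply/forallP => w; rewrite /in_star (negbTE uc). Qed.

Lemma burning_number_in_star : 2 < #|T| -> burning_number in_star (#|T| - 1).
Proof.
move=> T_gt2; split.
  have [s burn size_s] :=
    burning_seq_card_sub1 in_star_digraph in_star_weakly_connected T_gt2.
  by exists s.
move=> s burn; apply: leq_trans (card_sources_le_burning_seq burn).
by rewrite subn1 -(cardC1 c); apply/subset_leq_card/subsetP/in_star_sources.
Qed.

End InStar.

Theorem mainTheorem2 :
  (forall (T : finType) (e : rel T) (b : nat),
      digraph e -> weakly_connected e -> 2 < #|T| ->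
      burning_number e b -> b <= #|T| - 1)
  /\
  (forall n : nat, 2 < n ->
      exists (T : finType) (e : rel T),
        [/\ #|T| = n, digraph e, weakly_connected e & burning_number e (n - 1)]).
Proof.
split; first exact: burning_number_le_card_sub1.
move=> [|n] // n_gt2; exists 'I_n.+1, (in_star ord0); split.
- exact: card_ord.
- exact: in_star_digraph.
- exact: in_star_weakly_connected.
- by have := burning_number_in_star (ord0 : 'I_n.+1); rewrite card_ord; apply.
Qed.
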